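(* For every $\beta>0$ and every $L,M\geq 1$, \begin{equation*} \frac{Z^{+,-}_{\mathcal{R}(L,M),\beta}}{Z^{+,+}_{\mathcal{R}(L,M),\beta}}= \Psi^{0}_{\mathcal R(L,M),\beta,\mathsf{h}^{+,+}_{L,M}}\big[\text{$\mathfrak g^{-}$ is not connected to $\mathfrak g^{+}$ in $\omega$}\big]. \end{equation*} In particular, the surface tension $\tau_{\beta}:=\liminf_{L\to\infty}\liminf_{M\to\infty}\frac{1}{L^{d-1}}\log \frac{Z^{+,+}_{\mathcal{R}(L,M),\beta}}{Z^{+,-}_{\mathcal{R}(L,M),\beta}}$ satisfies $\tau_{\beta}\geq 0$ for every $\beta>0$.
   Context: Fix $g>0$, $a\in\mathbb R$, and let $\mathrm d\rho_{g,a}(t)\propto e^{-gt^4-at^2}\mathrm dt$ on $\mathbb R$. For a finite $\Lambda\subset\mathbb Z^d$ ($d\geq2$) with nearest-neighbour edge set $E(\Lambda)$ and a field $\mathsf h\in\mathbb R^\Lambda$, the $\varphi^4$ partition function is $Z^{\varphi^4}_{\Lambda,\beta,\mathsf h}=\int \exp\big(\beta\sum_{xy\in E(\Lambda)}\varphi_x\varphi_y+\beta\sum_{x\in\Lambda}\mathsf h_x\varphi_x\big)\prod_{x\in\Lambda}\mathrm d\rho_{g,a}(\varphi_x)$. For $L,M\geq1$ let $\mathcal R(L,M)=\{-L,\dots,L\}^{d-1}\times\{-M,\dots,M\}$, its thick boundary $\partial^{\rm thick}\mathcal R(L,M)=\mathcal R(L,M)\setminus\big(\{-L+\log L+1,\dots,L-\log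 L-1\}^{d-1}\times\{-M,\dots,M\}\big)$, its top part $\partial^{\rm thick}_+=\partial^{\rm thick}\mathcal R(L,M)\cap\{x_d\in\{1,\dots,M\}\}$ and bottom part $\partial^{\rm thick}_-=\partial^{\rm thick}\mathcal R(L,M)\cap\{x_d\in\{-M,\dots,0\}\}$. Let $\mathsf h^{+,+}_{L,M}=\mathbbm 1_{\partial^{\rm thick}\mathcal R(L,M)}$ and $\mathsf h^{+,-}_{L,M}=\mathbbm 1_{\partial^{\rm thick}_+}-\mathbbm 1_{\partial^{\rm thick}_-}$, and $Z^{+,\pm}_{\mathcal R(L,M),\beta}:=Z^{\varphi^4}_{\mathcal R(L,M),\beta,\mathsf h^{+,\pm}_{L,M}}$. Let $\mathcal R^{+,-}(L,M)$ be the graph with vertices $\mathcal R(L,M)\cup\{\mathfrak g^+,\mathfrak g^-\}$ (two ghost vertices) and edges $E(\mathcal R(L,M))\cup\{x\mathfrak g^+:x\in\partial^{\rm thick}_+\}\cup\{x\mathfrak g^-:x\in\partial^{\rm thick}_-\}$. The free $\varphi^4$ random cluster measure $\Psi^{0}_{\mathcal R(L,M),\beta,\mathsf{h}^{+,+}_{L,M}}$ is the probability measure on pairs $(\omega,\mathsf a)\in\{0,1\}^{E(\mathcal R^{+,-}(L,M))}\times(\mathbb R^+)^{\mathcal R(L,M)}$ with density proportional to $\prod_{xy\in E(\mathcal R(L,M))}\sqrt{1-p_{xy}}\big(\tfrac{p_{xy}}{1-p_{xy}}\big)^{\omega_{xy}}\prod_{x\mathfrak g^{\pm}}\sqrt{1-p_{x\mathfrak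 g}}\big(\tfrac{p_{x\mathfrak g}}{1-p_{x\mathfrak g}}\big)^{\omega_{x\mathfrak g^\pm}}\,2^{\tilde k(\omega)}\prod_{x}\mathrm d\rho_{g,a}(\mathsf a_x)$, where $\mathrm d\rho_{g,a}(\mathsf a_x)$ here denotes the pushforward of $\rho_{g,a}$ under $t\mapsto|t|$, $p_{xy}=1-e^{-2\beta\mathsf a_x\mathsf a_y}$, $p_{x\mathfrak g}=1-e^{-2\beta\mathsf h^{+,+}_{L,M}(x)\mathsf a_x}$, and $\tilde k(\omega)$ is the number of connected components of $\omega$ after identifying $\mathfrak g^+$ and $\mathfrak g^-$. (After identifying the two ghosts this is the usual free $\varphi^4$ random cluster measure with field $\mathsf h^{+,+}_{L,M}$, i.e. an Ising random cluster model with couplings $\beta\mathsf a_x\mathsf a_y$ in the random environment $\mathsf a\sim|\varphi|$.) *)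

From HB Require Import structures.
From mathcomp Require Import all_boot all_order all_algebra.
From mathcomp Require Import all_classical all_reals all_analysis.
Set Implicit Arguments. Unset Strict Implicit. Unset Printing Implicit Defensive.
Import Order.TTheory GRing.Theory Num.Theory.
Local Open Scope ring_scope.

Section Phi4.
Variables (R : realType) (g a : R) (d : nat).

Definition rho_weight (t : R) : R := expR (- (g * t ^+ 4) - a * t ^+ 2).
Definition rho_norm : R :=
  fine (\int[@lebesgue_measure R]_(t in [set: R]) (rho_weight t)%:E)%E.
Definition rho_dens (t : R) : R := rho_weight t / rho_norm.

Variables (L M : nat).
Definition NN := maxn L M.
(* a point of Z^d, stored with coordinates shifted by NN; only the box R(L,M) is used *)
Definition V := {ffun 'I_d -> 'I_(NN.*2.+1)}.
Definition coord (x : V) (i : 'I_d) : int := (x i : nat)%:Z - NN%:Z.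
Definition is_last (i : 'I_d) : bool := (i : nat) == d.-1.

Definition box : {set V} :=
  [set x : V | [forall i : 'I_d,
     if is_last i then (- (M%:Z) <= coord x i <= M%:Z)%R
     else (- (L%:Z) <= coord x i <= L%:Z)%R]].

Definition inner_cyl : {set V} :=
  [set x in box | [forall i : 'I_d, is_last i ||
     ((- (L%:R) + ln (L%:R) + 1 <= (coord x i)%:~R :> R) &&
      ((coord x i)%:~R <= L%:R - ln (L%:R) - 1 :> R))]].
Definition thick : {set V} := box :\: inner_cyl.
Definition last_coord (x : V) : int :=
  \sum_(i : 'I_d | is_last i) coord x i.
Definition thickP : {set V} := [set x in thick | (1 <= last_coord x)%R].
Definition thickM : {set V} := [set x in thick | (last_coord x <= 0)%R].

(* nearest-neighbour edges of the box, each unordered edge listed once *)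
Definition adjZ (x y : V) : bool := (\sum_(i : 'I_d) `|coord x i - coord y i|)%N == 1%N.
Definition edges : {set V * V} :=
  [set e : V * V | [&& e.1 \in box, e.2 \in box, adjZ e.1 e.2 &
                   (enum_rank e.1 < enum_rank e.2)%N]].

Definition h_pp (x : V) : R := if x \in thick then 1 else 0.
Definition h_pm (x : V) : R :=
  (if x \in thickP then 1 else 0) - (if x \in thickM then 1 else 0).

Fixpoint iint (F : (V -> R) -> \bar R) (s : seq V) (phi : V -> R) : \bar R :=
  match s with
  | [::] => F phi
  | x :: s' => (\int[@lebesgue_measure R]_(t in [set: R])
                 ((rho_dens t)%:E * iint F s' (fun y => if y == x then t else phi y)))%E
  end.
Definition int_box (F : (V -> R) -> \bar R) : R := fine (iint F (enum box) (fun _ => 0)).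

Definition Zphi4 (beta : R) (h : V -> R) : R :=
  int_box (fun phi => (expR (beta * (\sum_(e in edges) phi e.1 * phi e.2)
                              + beta * (\sum_(x in box) h x * phi x)))%:E).

(* graph R^{+,-}(L,M) with the two ghosts identified: None is the ghost *)
Definition adj1 (wE : {set V * V}) (wG : {set V}) (u v : option V) : bool :=
  match u, v with
  | Some x, Some y => ((x, y) \in wE) || ((y, x) \in wE)
  | Some x, None | None, Some x => x \in wG
  | None, None => false
  end.
Definition verts1 : {set option V} := None |: [set Some x | x in box].
Definition ktilde (wE : {set V * V}) (wG : {set V}) : nat :=
  #|[set [set v in verts1 | connect (adj1 wE wG) u v] | u in verts1]|.

(* graph R^{+,-}(L,M) with two ghosts: inr true = g^+, inr false = g^- *)
Definition adj2 (wE : {set V * V}) (wG : {set V}) (u v : V + bool) : bool :=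
  match u, v with
  | inl x, inl y => ((x, y) \in wE) || ((y, x) \in wE)
  | inl x, inr b | inr b, inl x => (x \in wG) && (if b then x \in thickP else x \in thickM)
  | inr _, inr _ => false
  end.
Definition ghosts_disconnected (wE : {set V * V}) (wG : {set V}) : bool :=
  ~~ connect (adj2 wE wG) (inr false) (inr true).

Definition rc_weight (beta : R) (wE : {set V * V}) (wG : {set V}) (aa : V -> R) : R :=
  (\prod_(e in edges)
     (let p := 1 - expR (- (2 * beta * aa e.1 * aa e.2)) in
      Num.sqrt (1 - p) * (p / (1 - p)) ^+ (e \in wE))) *
  (\prod_(x in thick)
     (let p := 1 - expR (- (2 * beta * h_pp x * aa x)) in
      Num.sqrt (1 - p) * (p / (1 - p)) ^+ (x \in wG))) *
  2 ^+ ktilde wE wG.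

(* Psi^0_{R(L,M),beta,h_pp}[event]; a_x = |phi_x| realises the pushforward of rho under |.| *)
Definition Psi0 (beta : R) (P : {set V * V} -> {set V} -> bool) : R :=
  int_box (fun phi => (\sum_(wE : {set V * V} | wE \subset edges)
                       \sum_(wG : {set V} | (wG \subset thick) && P wE wG)
                         rc_weight beta wE wG (fun x => `|phi x|))%:E)
  / int_box (fun phi => (\sum_(wE : {set V * V} | wE \subset edges)
                       \sum_(wG : {set V} | wG \subset thick)
                         rc_weight beta wE wG (fun x => `|phi x|))%:E).

End Phi4.

Definition Zpp (R : realType) (g a : R) (d L M : nat) (beta : R) : R :=
  Zphi4 g a beta (@h_pp R d L M).
Definition Zpm (R : realType) (g a : R) (d L M : nat) (beta : R) : R :=
  Zphi4 g a beta (@h_pm R d L M).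

Definition surface_tension (R : realType) (g a : R) (d : nat) (beta : R) : \bar R :=
  limn_einf (fun L : nat =>
    limn_einf (fun M : nat =>
      ((ln (Zpp g a d L.+1 M.+1 beta / Zpm g a d L.+1 M.+1 beta)
        / ((L.+1)%:R ^+ d.-1))%:E))).

From Pilot Require Import Defs.
From HB Require Import structures.
From mathcomp Require Import all_boot all_order all_algebra.
From mathcomp Require Import all_classical all_reals all_analysis.
From mathcomp Require Import measurable_realfun ring.
Import Order.TTheory GRing.Theory Num.Theory.
Local Open Scope ring_scope.
Set Implicit Arguments. Unset Strict Implicit. Unset Printing Implicit Defensive.

(* Since rho is even, every sign flip phi |-> phi (-1)^[x in S], S a subset of
   the box, preserves the product measure, so Z^h is the integral of the average
   over all flips, which only depends on the moduli a = |phi|.  For fixed a this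
   average is an Ising partition function with couplings beta a_x a_y, and
   writing e^(J s) = e^(-J) (1 + (e^(2J) - 1) [s = +1]) for every bond and every
   ghost bond expands it into a sum over omega of the random-cluster weight
   times the number of spin configurations compatible with omega.  With + on
   the ghost this number is 2^(k(omega) - 1); with + on g^+ and - on g^- it is
   the same when g^+ and g^- are not connected in omega and 0 otherwise.  Hence
   Z^{+,-}/Z^{+,+} is the Psi^0-probability of that event, which is at most 1,
   so tau_beta >= 0. *)

Section FieldIntegral.
Variables (R : realType) (g a : R) (d L M : nat).
Local Notation VV := (V d L M).
Local Notation leb := (@lebesgue_measure R).
Local Notation rho := (rho_dens g a).

Definition field_update (phi : VV -> R) (x : VV) (t : R) : VV -> R :=
  fun y => if y == x then t else phi y.

Definition sign_flip (S : {set VV}) (psi : VV -> R) : VV -> R :=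
  fun v => if v \in S then - psi v else psi v.

(* Measurability of an observable of the field, phrased without a sigma-algebra
   on [VV -> R]: along every coordinatewise measurable family of fields. *)
Definition measurable_family dd (T : measurableType dd) (Phi : T -> VV -> R) :=
  forall v, measurable_fun setT (fun t => Phi t v).

Definition measurable_obs (f : (VV -> R) -> R) :=
  forall dd (T : measurableType dd) (Phi : T -> VV -> R),
    measurable_family Phi -> measurable_fun setT (fun t => f (Phi t)).

Definition emeasurable_obs (F : (VV -> R) -> \bar R) :=
  forall dd (T : measurableType dd) (Phi : T -> VV -> R),
    measurable_family Phi -> measurable_fun setT (fun t => F (Phi t)).

Lemma measurable_obs_EFin f : measurable_obs f -> emeasurable_obs (fun psi => (f psi)%:E).
Proof. by move=> mf dd T Phi mPhi; apply/measurable_EFinP; exact: mf. Qed.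

Lemma measurable_obs_cst c : measurable_obs (fun=> c).
Proof. by move=> dd T Phi _; exact: measurable_cst. Qed.

Lemma measurable_obs_coord v : measurable_obs (fun psi => psi v).
Proof. by move=> dd T Phi; apply. Qed.

Lemma measurable_obsD f1 f2 : measurable_obs f1 -> measurable_obs f2 ->
  measurable_obs (fun psi => f1 psi + f2 psi).
Proof. by move=> m1 m2 dd T Phi mPhi; apply: measurable_funD; [exact: m1|exact: m2]. Qed.

Lemma measurable_obsM f1 f2 : measurable_obs f1 -> measurable_obs f2 ->
  measurable_obs (fun psi => f1 psi * f2 psi).
Proof. by move=> m1 m2 dd T Phi mPhi; apply: measurable_funM; [exact: m1|exact: m2]. Qed.

Lemma measurable_obs_sum (I : Type) (r : seq I) (P : pred I) (f : I -> (VV -> R) -> R) :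
  (forall i, measurable_obs (f i)) -> measurable_obs (fun psi => \sum_(i <- r | P i) f i psi).
Proof.
move=> mf dd T Phi mPhi; elim: r => [|i r IH].
  by under eq_fun do rewrite big_nil; exact: measurable_cst.
under eq_fun do rewrite big_cons.
by case: (P i) => //; apply: measurable_funD => //; exact: mf.
Qed.

Lemma measurable_obs_expR f : measurable_obs f -> measurable_obs (fun psi => expR (f psi)).
Proof. by move=> mf dd T Phi mPhi; exact: measurableT_comp (mf _ _ _ mPhi). Qed.

Lemma measurable_obs_sign_flip f S : measurable_obs f ->
  measurable_obs (fun psi => f (sign_flip S psi)).
Proof.
move=> mf dd T Phi mPhi; apply: (mf _ _ (fun t => sign_flip S (Phi t))) => v.
rewrite /sign_flip; case: (v \in S); last exact: mPhi.
exact: measurableT_comp (mPhi v).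
Qed.

Lemma measurable_obs_abs f : measurable_obs f ->
  measurable_obs (fun psi => f (fun x => `|psi x|)).
Proof.
move=> mf dd T Phi mPhi; apply: (mf _ _ (fun t x => `|Phi t x|)) => v.
exact: measurableT_comp (mPhi v).
Qed.

Lemma rho_dens_ge0 t : 0 <= rho t.
Proof.
rewrite /rho_dens divr_ge0 ?expR_ge0 // /rho_norm fine_ge0 //.
by apply: integral_ge0 => x _; rewrite lee_fin expR_ge0.
Qed.

Lemma measurable_rho_dens : measurable_fun setT rho.
Proof.
apply: measurable_funM; last exact: measurable_cst.
apply: measurableT_comp; first exact: measurable_expR.
apply: measurable_funB; last by apply: measurable_funM => //; exact: exprn_measurable.
apply: measurableT_comp; first exact: oppr_measurable.
by apply: measurable_funM => //; exact: exprn_measurable.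
Qed.

Lemma rho_densN t : rho (- t) = rho t.
Proof. by rewrite /rho_dens /rho_weight !sqrrN -[4%N]/(2 * 2)%N !exprM sqrrN. Qed.

Section Nonnegative.
Variable F : (VV -> R) -> \bar R.
Hypotheses (mF : emeasurable_obs F) (F_ge0 : forall psi, (0 <= F psi)%E).

Lemma iint_ge0 s phi : (0 <= iint g a F s phi)%E.
Proof.
elim: s phi => [|x s IH] phi /=; first exact: F_ge0.
apply: integral_ge0 => t _; apply: mule_ge0 => //.
by rewrite lee_fin rho_dens_ge0.
Qed.

Lemma emeasurable_iint s : emeasurable_obs (iint g a F s).
Proof.
elim: s => [|x s IH] dd T Phi mPhi /=; first exact: mF.
pose f (p : T * R) := ((rho p.2)%:E * iint g a F s (field_update (Phi p.1) x p.2))%E.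
have mf : measurable_fun setT f.
  apply: emeasurable_funM.
    apply/measurable_EFinP; apply: measurableT_comp measurable_snd.
    exact: measurable_rho_dens.
  apply: (IH _ _ (fun p : T * R => field_update (Phi p.1) x p.2)) => v.
  rewrite /field_update; case: (v == x); first exact: measurable_snd.
  exact: measurableT_comp (mPhi v) measurable_fst.
have f_ge0 p : (0 <= f p)%E by rewrite mule_ge0 ?lee_fin ?rho_dens_ge0 ?iint_ge0.
exact: (@measurable_fun_fubini_tonelli_F _ _ _ _ _ leb f mf f_ge0).
Qed.

Lemma measurable_iint_update s phi x :
  measurable_fun setT (fun t => iint g a F s (field_update phi x t)).
Proof.
have mU : measurable_family (fun t : R => field_update phi x t).
  by move=> v; rewrite /field_update; case: (v == x).
exact: (emeasurable_iint s mU).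
Qed.

Lemma measurable_iint_integrand s phi x :
  measurable_fun setT (fun t => (rho t)%:E * iint g a F s (field_update phi x t))%E.
Proof.
apply: emeasurable_funM; last exact: measurable_iint_update.
by apply/measurable_EFinP; exact: measurable_rho_dens.
Qed.

Lemma iint_integrand_ge0 s phi x t :
  (0 <= (rho t)%:E * iint g a F s (field_update phi x t))%E.
Proof. by rewrite mule_ge0 ?lee_fin ?rho_dens_ge0 ?iint_ge0. Qed.

End Nonnegative.

Lemma integral_rho_densN (G : R -> \bar R) : measurable_fun setT G ->
  (forall t, (0 <= G t)%E) ->
  (\int[leb]_(t in setT) ((rho t)%:E * G (- t)%R) =
   \int[leb]_(t in setT) ((rho t)%:E * G t))%E.
Proof.
move=> mG G_ge0; pose H t := ((rho t)%:E * G t)%E.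
have mH : measurable_fun setT H.
  by apply: emeasurable_funM => //; apply/measurable_EFinP; exact: measurable_rho_dens.
have H_ge0 t : (0 <= H t)%E by rewrite mule_ge0 ?lee_fin ?rho_dens_ge0.
transitivity (\int[leb]_(t in setT) (H \o -%R) t)%E.
  by apply: eq_integral => t _; rewrite /H /= rho_densN.
transitivity (\int[leb]_(t in ((-%R : _ -> measurableTypeR R) @^-1` setT)%classic)
                (H \o -%R) t)%E.
  by rewrite preimage_setT.
rewrite -ge0_integral_pushforward //=.
by apply: eq_measure_integral => //= A mA _; exact: lebesgue_measureN.
Qed.

Lemma iint_sign_flip F s S phi : emeasurable_obs F -> (forall psi, (0 <= F psi)%E) ->
  iint g a (fun psi => F (sign_flip S psi)) s phi = iint g a F s (sign_flip S phi).
Proof.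
move=> mF F_ge0; elim: s phi => [|x s IH] phi //=.
transitivity (\int[leb]_(t in setT) ((rho t)%:E *
   iint g a F s (field_update (sign_flip S phi) x (if x \in S then (- t)%R else t))))%E.
  apply: eq_integral => t _; rewrite IH; congr (_ * iint _ _ _ _ _)%E.
  apply/funext => y; rewrite /sign_flip /field_update; case: eqP => [->|//].
  by case: (x \in S).
case: (x \in S) => //.
apply: (integral_rho_densN (G := fun t => iint g a F s (field_update _ x t))).
  exact: measurable_iint_update.
by move=> t; exact: iint_ge0.
Qed.

Lemma iint0 s phi : iint g a (fun _ : VV -> R => 0%E) s phi = 0%E.
Proof.
elim: s phi => [|x s IH] phi //=.
by under eq_integral do rewrite IH mule0; exact: integral0.
Qed.

Lemma iintD F1 F2 s phi : emeasurable_obs F1 -> emeasurable_obs F2 ->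
  (forall psi, (0 <= F1 psi)%E) -> (forall psi, (0 <= F2 psi)%E) ->
  iint g a (fun psi => F1 psi + F2 psi)%E s phi =
  (iint g a F1 s phi + iint g a F2 s phi)%E.
Proof.
move=> m1 m2 F1_ge0 F2_ge0; elim: s phi => [|x s IH] phi //=.
under eq_integral do rewrite IH ge0_muleDr ?iint_ge0 //.
apply: ge0_integralD => //; try exact: measurable_iint_integrand.
  by move=> t _; exact: iint_integrand_ge0.
by move=> t _; exact: iint_integrand_ge0.
Qed.

Lemma iint_sum (I : Type) (r : seq I) (f : I -> (VV -> R) -> R) s phi :
  (forall i, measurable_obs (f i)) -> (forall i psi, 0 <= f i psi) ->
  iint g a (fun psi => (\sum_(i <- r) f i psi)%:E) s phi =
  (\sum_(i <- r) iint g a (fun psi => (f i psi)%:E) s phi)%E.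
Proof.
move=> mf f_ge0; elim: r => [|i r IH].
  by rewrite big_nil -(iint0 s phi); congr iint; apply/funext => psi; rewrite big_nil.
rewrite big_cons -IH -iintD.
- by congr iint; apply/funext => psi; rewrite big_cons EFinD.
- exact: measurable_obs_EFin.
- exact/measurable_obs_EFin/measurable_obs_sum.
- by move=> psi; rewrite lee_fin.
- by move=> psi; rewrite lee_fin sumr_ge0.
Qed.

Lemma iintZl F (c : R) s phi : 0 <= c -> emeasurable_obs F -> (forall psi, (0 <= F psi)%E) ->
  iint g a (fun psi => c%:E * F psi)%E s phi = (c%:E * iint g a F s phi)%E.
Proof.
move=> c_ge0 mF F_ge0; elim: s phi => [|x s IH] phi //=.
under eq_integral do rewrite IH muleCA.
apply: ge0_integralZl => //; first exact: measurable_iint_integrand.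
by move=> t _; exact: iint_integrand_ge0.
Qed.

Lemma le_iint F1 F2 s phi : emeasurable_obs F1 -> emeasurable_obs F2 ->
  (forall psi, (0 <= F1 psi)%E) -> (forall psi, (F1 psi <= F2 psi)%E) ->
  (iint g a F1 s phi <= iint g a F2 s phi)%E.
Proof.
move=> m1 m2 F1_ge0 le12; have F2_ge0 psi : (0 <= F2 psi)%E by exact: le_trans (le12 psi).
elim: s phi => [|x s IH] phi //=.
apply: ge0_le_integral => //; try exact: measurable_iint_integrand.
  by move=> t _; exact: iint_integrand_ge0.
by move=> t _; rewrite lee_wpmul2l ?lee_fin ?rho_dens_ge0.
Qed.

End FieldIntegral.

Section ProductExpansion.
Variables (R : comPzRingType) (I : finType).

Lemma prod_indicator (A : {pred I}) (P : pred I) :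
  \prod_(i in A) ((P i)%:R : R) = [forall i in A, P i]%:R.
Proof.
case: (boolP [forall i in A, P i]) => [/forall_inP allP | ].
  by apply: big1 => i /allP ->.
rewrite negb_forall_in => /exists_inP [i iA nPi].
by rewrite (bigD1 i) //= (negbTE nPi) mul0r.
Qed.

Lemma bigA_distr_subset (A : {set I}) (F G : I -> R) :
  \prod_(i in A) (G i + F i) =
  \sum_(W : {set I} | W \subset A) \prod_(i in A) (if i \in W then F i else G i).
Proof.
pose F' i := if i \in A then F i else 0.
pose G' i := if i \in A then G i else 1.
have -> : \prod_(i in A) (G i + F i) = \prod_i (F' i + G' i).
  rewrite big_mkcond /=; apply: eq_bigr => i _; rewrite /F' /G'.
  by case: (i \in A); rewrite ?add0r // addrC.
rewrite bigA_distr (bigID (fun W : {set I} => W \subset A)) /=.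
rewrite [X in _ + X]big1 ?addr0; last first.
  by move=> W /subsetPn [i iW niA]; rewrite (bigD1 i) //= iW /F' (negbTE niA) mul0r.
apply: eq_big => // W WA; rewrite [RHS]big_mkcond /=; apply: eq_bigr => i _.
rewrite /F' /G'; case: (boolP (i \in A)) => iA //.
by rewrite (negbTE (contra (fintype.subsetP WA i) iA)).
Qed.

Lemma bigA_distr_subset_indicator (A : {set I}) (F G : I -> R) (b : pred I) :
  \prod_(i in A) (G i + F i * (b i)%:R) =
  \sum_(W : {set I} | W \subset A)
     \prod_(i in A) (if i \in W then F i else G i) * [forall i in A, (i \in W) ==> b i]%:R.
Proof.
rewrite bigA_distr_subset; apply: eq_bigr => W _.
rewrite -prod_indicator -big_split /=; apply: eq_bigr => i _.
by case: (i \in W); rewrite ?mulr1.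
Qed.

End ProductExpansion.

Section SymmetricDifference.
Variable T : finType.
Implicit Types A B D : {set T}.

Definition symdiff A B : {set T} := (A :\: B) :|: (B :\: A).

Lemma in_symdiff A B x : (x \in symdiff A B) = (x \in A) (+) (x \in B).
Proof. by rewrite !inE; case: (x \in A); case: (x \in B). Qed.

Lemma symdiffK B : involutive (symdiff ^~ B).
Proof. by move=> A; apply/finset.setP => x; rewrite !in_symdiff addbK. Qed.

Lemma symdiff_subset A B D : B \subset D -> (symdiff A B \subset D) = (A \subset D).
Proof.
move=> /fintype.subsetP BD.
apply/fintype.subsetP/fintype.subsetP => AD x; last first.
  by rewrite in_symdiff; case: (boolP (x \in B)) => [/BD|_]; rewrite ?addbT ?addbF // => /AD.
case: (boolP (x \in B)) => [/BD //| nB xA].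
by apply: AD; rewrite in_symdiff xA (negbTE nB).
Qed.

End SymmetricDifference.

Section EdgeClosedSets.
Variables (T : finType) (e : rel T) (D : {set T}).
Hypotheses (e_sym : symmetric e) (e_D : forall u v, e u v -> u \in D).

Definition cluster u := [set v in D | connect e u v].
Definition clusters := [set cluster u | u in D].
Definition edge_closed (f : {set T}) :=
  [forall u, forall v, e u v ==> ((u \in f) == (v \in f))].

Let e_D' u v : e u v -> v \in D.
Proof. by rewrite e_sym; exact: e_D. Qed.

Lemma mem_cluster u : u \in D -> u \in cluster u.
Proof. by move=> uD; rewrite inE uD connect0. Qed.

Lemma cluster_eq u v : v \in cluster u -> cluster v = cluster u.
Proof.
rewrite inE => /andP [_ cuv]; apply/finset.setP => w; rewrite !inE.
case: (w \in D) => //=; apply/idP/idP => [cvw|cuw]; first exact: connect_trans cuv cvw.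
by rewrite (sym_connect_sym e_sym) in cuv; exact: connect_trans cuv cuw.
Qed.

Lemma edge_closed_connect f u v : edge_closed f -> connect e u v -> (u \in f) = (v \in f).
Proof.
move=> /forallP f_cl; apply: (@closed_connect _ _ f) => x y exy.
by have /forallP /(_ y) := f_cl x; rewrite exy => /eqP.
Qed.

Lemma subset_clusters_cover (Q1 Q2 : {set {set T}}) :
  Q1 \subset clusters -> Q2 \subset clusters ->
  finset.cover Q1 \subset finset.cover Q2 -> Q1 \subset Q2.
Proof.
move=> /fintype.subsetP sQ1 /fintype.subsetP sQ2 /fintype.subsetP c12.
apply/fintype.subsetP => C CQ1; have /imsetP [u uD CE] := sQ1 C CQ1.
have /c12 /finset.bigcupP [C' C'Q2 uC'] : u \in finset.cover Q1.
  by apply/finset.bigcupP; exists C => //; rewrite CE; exact: mem_cluster.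
have /imsetP [u' _ C'E] := sQ2 C' C'Q2.
have uC : u \in cluster u' by rewrite -C'E.
by rewrite CE (cluster_eq uC) -C'E.
Qed.

Lemma edge_closed_cover :
  [set f : {set T} | (f \subset D) && edge_closed f] =
  [set finset.cover Q | Q in powerset clusters].
Proof.
apply/finset.setP => f; rewrite inE; apply/idP/imsetP.
  move=> /andP [fD f_cl]; exists [set C in clusters | C \subset f].
    by rewrite powersetE; apply/fintype.subsetP => C; rewrite inE => /andP [].
  apply/finset.setP => w; apply/idP/finset.bigcupP => [wf|[C]]; last first.
    by rewrite inE => /andP [_ /fintype.subsetP]; apply.
  have wD : w \in D by exact: (fintype.subsetP fD).
  exists (cluster w); last exact: mem_cluster.
  rewrite inE (imset_f _ wD); apply/fintype.subsetP => v; rewrite inE => /andP [_ cwv].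
  by rewrite -(edge_closed_connect f_cl cwv).
move=> [Q]; rewrite powersetE => /fintype.subsetP QP ->.
have cover_step u v : e u v -> u \in finset.cover Q -> v \in finset.cover Q.
  move=> euv /finset.bigcupP [C CQ uC]; apply/finset.bigcupP; exists C => //.
  have /imsetP [w _ CE] := QP C CQ; move: uC; rewrite CE !inE => /andP [_ cwu].
  by rewrite (e_D' euv) (connect_trans cwu (connect1 euv)).
apply/andP; split.
  apply/fintype.subsetP => w /finset.bigcupP [C /QP /imsetP [u _ ->]].
  by rewrite inE => /andP [].
apply/forallP => u; apply/forallP => v; apply/implyP => euv.
apply/eqP; apply/idP/idP; first exact: (cover_step u v).
by apply: (cover_step v u); rewrite e_sym.
Qed.

Lemma card_edge_closed :
  (#|[set f : {set T} | (f \subset D) && edge_closed f]| = 2 ^ #|clusters|)%N.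
Proof.
rewrite edge_closed_cover -card_powerset.
apply: card_in_imset => Q1 Q2; rewrite !powersetE => s1 s2 c12.
by apply/eqP; rewrite finset.eqEsubset; apply/andP; split;
  apply: subset_clusters_cover; rewrite // c12.
Qed.

Lemma edge_closedD f : edge_closed f -> edge_closed (D :\: f).
Proof.
move=> /forallP f_cl; apply/forallP => u; apply/forallP => v; apply/implyP => euv.
have /forallP /(_ v) := f_cl u; rewrite euv /= => /eqP fuv.
by rewrite !inE fuv (e_D euv) (e_D' euv).
Qed.

(* Complementation in D pairs the closed sets containing r with those avoiding r. *)
Lemma card_edge_closed_avoiding r : r \in D ->
  (2 * #|[set f : {set T} | [&& f \subset D, edge_closed f & r \notin f]]| =
   2 ^ #|clusters|)%N.
Proof.
move=> rD; rewrite -card_edge_closed.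
set A := [set f : {set T} | (f \subset D) && edge_closed f].
rewrite -(cardsID [set f : {set T} | r \in f] A).
have -> : A :\: [set f : {set T} | r \in f] =
          [set f : {set T} | [&& f \subset D, edge_closed f & r \notin f]].
  by apply/finset.setP => f; rewrite !inE andbC andbA.
have -> : A :&: [set f : {set T} | r \in f] =
          [set D :\: f | f in
             [set f : {set T} | [&& f \subset D, edge_closed f & r \notin f]]].
  apply/finset.setP => f; rewrite !inE; apply/idP/imsetP.
    move=> /andP [/andP [fD f_cl] rf]; exists (D :\: f).
      by rewrite !inE finset.subsetDl edge_closedD //= rf.
    by rewrite finset.setDDr finset.setDv finset.set0U (finset.setIidPr fD).
  move=> [f0]; rewrite !inE => /and3P [f0D f0_cl rf0] ->.
  by rewrite finset.subsetDl edge_closedD //= !inE rf0 rD.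
rewrite card_in_imset ?mul2n ?addnn // => f1 f2; rewrite !inE.
move=> /and3P [s1 _ _] /and3P [s2 _ _] /(congr1 (finset.setD D)).
by rewrite !finset.setDDr !finset.setDv !finset.set0U !(finset.setIidPr _).
Qed.

End EdgeClosedSets.

Section CompatibleSpins.
Variables (R : realType) (d L M : nat).
Local Notation VV := (V d L M).
Local Notation thk := (thick R d L M).
Local Notation thP := (thickP R d L M).
Local Notation thM := (thickM R d L M).
Local Notation bx := (box d L M).
Local Notation eds := (edges d L M).

(* A spin configuration is encoded by the set [S] of sites with spin -1; a
   boundary condition [bc S x] says that the spin at [x] agrees with the
   ghost attached to [x]. *)
Definition bond_agrees (S : {set VV}) (e : VV * VV) := (e.1 \in S) == (e.2 \in S).
Definition plus_bc (S : {set VV}) (x : VV) := x \notin S.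
Definition plus_minus_bc (S : {set VV}) (x : VV) := (x \in thP) == (x \notin S).

Definition compatible (bc : {set VV} -> VV -> bool) S (W : {set VV * VV}) (U : {set VV}) :=
  [forall e in eds, (e \in W) ==> bond_agrees S e] &&
  [forall x in thk, (x \in U) ==> bc S x].

Definition n_compatible bc W U :=
  #|[set S : {set VV} | (S \subset bx) && compatible bc S W U]|.

Lemma thick_sub_box : thk \subset bx.
Proof. exact: finset.subsetDl. Qed.

Lemma thickP_sub_thick : thP \subset thk.
Proof. by apply/fintype.subsetP => x; rewrite finset.in_set => /andP []. Qed.

Lemma thickM_sub_thick : thM \subset thk.
Proof. by apply/fintype.subsetP => x; rewrite finset.in_set => /andP []. Qed.

Lemma edge_in_box e : e \in eds -> (e.1 \in bx) && (e.2 \in bx).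
Proof. by rewrite inE => /and4P [-> -> _ _]. Qed.

Lemma thickM_thickP x : x \in thk -> (x \in thM) = (x \notin thP).
Proof.
have in_sep (A : {set VV}) (P : pred VV) : (x \in [set y in A | P y]) = (x \in A) && P x.
  by rewrite finset.in_set.
by move=> xt; rewrite /thickM /thickP !in_sep xt /= leNgt gtz0_ge1.
Qed.

Variables (W : {set VV * VV}) (U : {set VV}).
Hypotheses (W_edges : W \subset eds) (U_thick : U \subset thk).

Lemma adj1_sym : symmetric (Defs.adj1 W U).
Proof. by move=> [x|] [y|] //=; rewrite orbC. Qed.

Lemma adj2_sym : symmetric (adj2 R W U).
Proof. by move=> [x|b] [y|c] //=; rewrite orbC. Qed.

Lemma mem_verts1 x : (Some x \in verts1 d L M) = (x \in bx).
Proof. by rewrite /verts1 finset.in_setU1 /= (mem_imset _ _ Some_inj). Qed.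

Lemma adj1_verts1 u v : Defs.adj1 W U u v -> u \in verts1 d L M.
Proof.
case: u => [x|]; last by rewrite finset.setU11.
rewrite mem_verts1; case: v => [y|] /=.
  by case/orP => /(fintype.subsetP W_edges) /edge_in_box /andP [].
by move=> /(fintype.subsetP U_thick) /(fintype.subsetP thick_sub_box).
Qed.

Lemma edge_closed_plus (S : {set VV}) :
  edge_closed (Defs.adj1 W U) [set Some x | x in S] = compatible plus_bc S W U.
Proof.
have inS x : (Some x \in [set Some x | x in S]) = (x \in S) by exact: mem_imset Some_inj.
have noneS : None \notin [set Some x | x in S] by apply/imsetP => -[].
apply/forallP/andP => [cl | [/forall_inP agree /forall_inP ghost] u].
  split; apply/forall_inP.
    move=> [x y] _; apply/implyP => exy.
    by have /forallP /(_ (Some y)) := cl (Some x); rewrite /= exy !inS.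
  move=> x _; apply/implyP => xU.
  have /forallP /(_ None) := cl (Some x).
  by rewrite /= xU inS (negbTE noneS) /plus_bc => /eqP ->.
have agreeW x y : (x, y) \in W -> (x \in S) = (y \in S).
  by move=> exy; have := agree _ (fintype.subsetP W_edges _ exy); rewrite exy => /eqP.
have ghostU x : x \in U -> x \notin S.
  by move=> xU; have := ghost _ (fintype.subsetP U_thick _ xU); rewrite xU.
apply/forallP => v; apply/implyP; case: u v => [x|] [y|] //=.
- by rewrite !inS => /orP [/agreeW | /agreeW] ->.
- by rewrite inS (negbTE noneS) => /ghostU /negbTE ->.
- by rewrite inS (negbTE noneS) => /ghostU /negbTE ->.
Qed.

Lemma n_compatible_plus : (2 * n_compatible plus_bc W U = 2 ^ ktilde W U)%N.
Proof.
have ghost_verts1 : None \in verts1 d L M by exact: finset.setU11.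
rewrite -(card_edge_closed_avoiding adj1_sym adj1_verts1 ghost_verts1).
congr (2 * _)%N; rewrite /n_compatible -(card_imset _ (imset_inj Some_inj)).
apply: eq_card => f; rewrite [in RHS]inE; apply/imsetP/and3P.
  move=> [S]; rewrite inE => /andP [Sbx compS] ->; split.
  - apply/fintype.subsetP => _ /imsetP [x xS ->].
    by rewrite mem_verts1 (fintype.subsetP Sbx).
  - by rewrite edge_closed_plus.
  - by apply/imsetP => -[].
move=> [fV f_cl nf].
have f_img : f = [set Some x | x in [set x | Some x \in f]].
  apply/finset.setP => -[x|]; first by rewrite (mem_imset _ _ Some_inj) inE.
  by rewrite (negbTE nf); apply/esym/imsetP => -[].
exists [set x | Some x \in f]; last exact: f_img.
rewrite inE -edge_closed_plus -f_img f_cl andbT.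
by apply/fintype.subsetP => x; rewrite inE -mem_verts1 => /(fintype.subsetP fV).
Qed.

Lemma n_compatible_plus_minus_connected :
  ~~ ghosts_disconnected R W U -> n_compatible plus_minus_bc W U = 0%N.
Proof.
move/negbNE => conn; apply/eqP; rewrite cards_eq0; apply/eqP/finset.setP => S.
rewrite !inE; apply/negbTE/negP => /andP [_ /andP [/forall_inP agree /forall_inP ghost]].
have ghost_spin x b : adj2 R W U (inl x) (inr b) -> (x \in S) = ~~ b.
  move=> /= /andP [xU xb]; have xT := fintype.subsetP U_thick _ xU.
  have := ghost _ xT; rewrite xU /plus_minus_bc /= => /eqP.
  case: b xb => [-> | xM]; first by case: (x \in S).
  by rewrite -(negbK (x \in thP)) -thickM_thickP // xM; case: (x \in S).
(* Spins are constant along open paths, yet g^+ has spin + and g^- spin -. *)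
pose spin_minus := [pred u : VV + bool | if u is inl x then x \in S else u == inr false].
suff : (inr false \in spin_minus) = (inr true \in spin_minus) by [].
apply: (@closed_connect _ _ spin_minus) conn => -[x|b] [y|c] //= H; rewrite !inE /=.
- have agreeW z t : (z, t) \in W -> (z \in S) = (t \in S).
    by move=> ezt; have := agree _ (fintype.subsetP W_edges _ ezt); rewrite ezt => /eqP.
  by case/orP: H => /agreeW ->.
- by rewrite (ghost_spin _ _ H); case: c {H}.
- by rewrite (ghost_spin _ _ H); case: b {H}.
Qed.

Section Disconnected.
Hypothesis disc : ghosts_disconnected R W U.

Definition minus_cluster := [set x in bx | connect (adj2 R W U) (inr false) (inl x)].

Lemma minus_cluster_sub_box : minus_cluster \subset bx.
Proof. by apply/fintype.subsetP => x; rewrite inE => /andP []. Qed.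

(* As the cluster of g^- avoids g^+, flipping it exchanges the two boundary
   conditions. *)
Lemma compatible_plus_minus_symdiff S :
  compatible plus_minus_bc S W U = compatible plus_bc (symdiff S minus_cluster) W U.
Proof.
set C := minus_cluster.
have inC x : (x \in C) = (x \in bx) && connect (adj2 R W U) (inr false) (inl x).
  by rewrite finset.in_set.
have C_edge e : e \in W -> (e.1 \in C) = (e.2 \in C).
  move=> eW; have /andP [e1b e2b] := edge_in_box (fintype.subsetP W_edges _ eW).
  have e12 : adj2 R W U (inl e.1) (inl e.2) by rewrite /= -surjective_pairing eW.
  rewrite !inC e1b e2b /=; apply/idP/idP => conn.
    exact: connect_trans conn (connect1 e12).
  by apply: connect_trans conn (connect1 _); rewrite adj2_sym.
have C_plus x : x \in U -> x \in thP -> x \notin C.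
  move=> xU xP; apply/negP; rewrite inC => /andP [_ conn].
  by move/negP: disc; apply; apply: connect_trans conn (connect1 _); rewrite /= xU xP.
have C_minus x : x \in U -> x \notin thP -> x \in C.
  move=> xU xP; have xT := fintype.subsetP U_thick _ xU.
  rewrite inC (fintype.subsetP thick_sub_box _ xT) /=; apply: connect1.
  by rewrite /= xU thickM_thickP.
congr (_ && _).
  apply: eq_forallb_in => e _; case: (boolP (e \in W)) => //= eW.
  rewrite /bond_agrees !in_symdiff (C_edge e eW).
  by case: (e.1 \in S); case: (e.2 \in S); case: (e.2 \in C).
apply: eq_forallb_in => x _; case: (boolP (x \in U)) => //= xU.
rewrite /plus_minus_bc /plus_bc in_symdiff; case: (boolP (x \in thP)) => xP.
  by rewrite (negbTE (C_plus x xU xP)) addbF; case: (x \in S).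
by rewrite (C_minus x xU xP) addbT; case: (x \in S).
Qed.

Lemma n_compatible_plus_minus_disconnected :
  n_compatible plus_minus_bc W U = n_compatible plus_bc W U.
Proof.
have Cbx := minus_cluster_sub_box.
rewrite /n_compatible -(card_imset _ (can_inj (symdiffK minus_cluster))).
apply: eq_card => S; rewrite [in RHS]inE; apply/imsetP/idP.
  by move=> [S0]; rewrite inE compatible_plus_minus_symdiff => + ->; rewrite symdiff_subset.
move=> SA; exists (symdiff S minus_cluster); last by rewrite symdiffK.
by rewrite inE compatible_plus_minus_symdiff symdiffK symdiff_subset.
Qed.

End Disconnected.

End CompatibleSpins.

Section SingleBond.
Variable R : realType.

Definition spin (b : bool) : R := if b then 1 else -1.
Definition rc_factor (p : R) (b : bool) : R := Num.sqrt (1 - p) * (p / (1 - p)) ^+ b.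

(* For p = 1 - e^(-2J): rc_factor p false = e^(-J) and
   rc_factor p true = e^(-J) (e^(2J) - 1). *)
Lemma expR_spin (J : R) (b : bool) :
  expR (J * spin b) = rc_factor (1 - expR (- (2 * J))) false +
                      rc_factor (1 - expR (- (2 * J))) true * b%:R.
Proof.
rewrite /rc_factor /= expr0 mulr1 expr1.
set q := expR (- J); have q_neq0 : q != 0 by rewrite gt_eqF ?expR_gt0.
have e2 : expR (- (2 * J)) = q ^+ 2 by rewrite /q expr2 -expRD; congr expR; ring.
rewrite e2 subKr sqrtr_sqr ger0_norm ?expR_ge0 //.
case: b; rewrite /spin /= ?mulr0 ?addr0 ?mulrN1 // mulr1.
have -> : expR J = q^-1 by rewrite /q expRN invrK.
by field.
Qed.

Lemma rc_factor_ge0 (y : R) b : 0 <= y -> 0 <= rc_factor (1 - expR (- y)) b.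
Proof.
move=> y_ge0; rewrite /rc_factor mulr_ge0 ?sqrtr_ge0 // subKr.
have : expR (- y) <= 1 by rewrite expR_le1 oppr_le0.
by move=> e_le1; rewrite exprn_ge0 // divr_ge0 ?expR_ge0 // subr_ge0.
Qed.

End SingleBond.

Section EdwardsSokal.
Variables (R : realType) (d L M : nat) (beta : R).
Local Notation VV := (V d L M).
Local Notation thk := (thick R d L M).
Local Notation thP := (thickP R d L M).
Local Notation bx := (box d L M).
Local Notation eds := (edges d L M).
Local Notation hpp := (@h_pp R d L M).
Local Notation hpm := (@h_pm R d L M).

Definition phi4_weight (h psi : VV -> R) : R :=
  expR (beta * (\sum_(e in eds) psi e.1 * psi e.2) + beta * (\sum_(x in bx) h x * psi x)).

Definition spin_sum (h a : VV -> R) : R :=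
  \sum_(S : {set VV} | S \subset bx) phi4_weight h (sign_flip S a).

Lemma measurable_obs_phi4_weight h : measurable_obs (phi4_weight h).
Proof.
apply/measurable_obs_expR/measurable_obsD; apply: (measurable_obsM (measurable_obs_cst beta)).
  apply: (measurable_obs_sum _ _ (f := fun e psi => psi e.1 * psi e.2)) => e.
  by apply: measurable_obsM; exact: measurable_obs_coord.
apply: (measurable_obs_sum _ _ (f := fun x psi => h x * psi x)) => x.
exact: measurable_obsM (measurable_obs_cst _) (measurable_obs_coord _).
Qed.

Lemma phi4_weight_sign_flip h a S : (forall x, x \notin thk -> h x = 0) ->
  phi4_weight h (sign_flip S a) =
  (\prod_(e in eds) expR ((beta * a e.1 * a e.2) * spin R (bond_agrees S e))) *
  (\prod_(x in thk) expR ((beta * a x) * (h x * spin R (x \notin S)))).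
Proof.
move=> h_out; rewrite /phi4_weight expRD; congr (_ * _).
  rewrite mulr_sumr expR_sum; apply: eq_bigr => e _; congr expR.
  by rewrite /sign_flip /bond_agrees /spin; case: (e.1 \in S); case: (e.2 \in S) => /=; ring.
rewrite mulr_sumr (big_setID thk) /= (finset.setIidPr (thick_sub_box R d L M)).
rewrite [X in _ + X]big1 ?addr0 => [|x]; last first.
  by rewrite finset.in_setD => /andP [/h_out -> _]; rewrite mul0r mulr0.
rewrite expR_sum; apply: eq_bigr => x _; congr expR.
by rewrite /sign_flip /spin; case: (x \in S) => /=; ring.
Qed.

Definition edge_prob (a : VV -> R) (e : VV * VV) := 1 - expR (- (2 * beta * a e.1 * a e.2)).
Definition ghost_prob (a : VV -> R) (x : VV) := 1 - expR (- (2 * beta * hpp x * a x)).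
Definition edge_weight a (W : {set VV * VV}) :=
  \prod_(e in eds) rc_factor (edge_prob a e) (e \in W).
Definition ghost_weight a (U : {set VV}) :=
  \prod_(x in thk) rc_factor (ghost_prob a x) (x \in U).

Lemma rc_weightE W U a :
  rc_weight beta W U a = edge_weight a W * ghost_weight a U * 2 ^+ ktilde W U.
Proof. by []. Qed.

Lemma rc_weight_ge0 (W : {set VV * VV}) (U : {set VV}) (a : VV -> R) :
  0 <= beta -> (forall x, 0 <= a x) -> 0 <= rc_weight beta W U a.
Proof.
move=> beta_ge0 a_ge0; rewrite rc_weightE !mulr_ge0 ?exprn_ge0 //.
  by apply: prodr_ge0 => e _; rewrite rc_factor_ge0 // !mulr_ge0.
by apply: prodr_ge0 => x _; rewrite rc_factor_ge0 // !mulr_ge0 // /h_pp; case: ifP.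
Qed.

Section Expansion.
Variables (h : VV -> R) (bc : {set VV} -> VV -> bool).
Hypothesis h_out : forall x, x \notin thk -> h x = 0.
Hypothesis h_bc :
  forall (S : {set VV}) x, x \in thk -> h x * spin R (x \notin S) = spin R (bc S x).

Lemma phi4_weight_sign_flip_expand a S :
  phi4_weight h (sign_flip S a) =
  \sum_(W : {set VV * VV} | W \subset eds) \sum_(U : {set VV} | U \subset thk)
     edge_weight a W * ghost_weight a U * (compatible R bc S W U)%:R.
Proof.
rewrite phi4_weight_sign_flip //.
have -> : \prod_(e in eds) expR ((beta * a e.1 * a e.2) * spin R (bond_agrees S e)) =
          \prod_(e in eds) (rc_factor (edge_prob a e) false +
                            rc_factor (edge_prob a e) true * (bond_agrees S e)%:R).
  by apply: eq_bigr => e _; rewrite expR_spin /edge_prob !mulrA.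
have -> : \prod_(x in thk) expR ((beta * a x) * (h x * spin R (x \notin S))) =
          \prod_(x in thk) (rc_factor (ghost_prob a x) false +
                            rc_factor (ghost_prob a x) true * (bc S x)%:R).
  apply: eq_bigr => x xT; rewrite h_bc // expR_spin /ghost_prob /h_pp xT mulr1.
  by rewrite !mulrA.
rewrite !bigA_distr_subset_indicator big_distrl; apply: eq_bigr => W _.
rewrite big_distrr; apply: eq_bigr => U _ /=.
rewrite /edge_weight /ghost_weight /compatible -mulnb natrM.
rewrite (eq_bigr (fun e => rc_factor (edge_prob a e) (e \in W))) => [|e _]; last first.
  by case: (e \in W).
rewrite (eq_bigr (fun x => rc_factor (ghost_prob a x) (x \in U))) => [|x _]; last first.
  by case: (x \in U).
ring.
Qed.

Lemma spin_sum_expand a :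
  spin_sum h a =
  \sum_(W : {set VV * VV} | W \subset eds) \sum_(U : {set VV} | U \subset thk)
     edge_weight a W * ghost_weight a U * (n_compatible R bc W U)%:R.
Proof.
rewrite /spin_sum; under eq_bigr => S _ do rewrite phi4_weight_sign_flip_expand.
rewrite exchange_big; apply: eq_bigr => W _.
rewrite exchange_big; apply: eq_bigr => U _.
rewrite -mulr_sumr -natr_sum /n_compatible -sum1dep_card big_mkcondr /=.
by congr (_ * _%:R); apply: eq_bigr => S _; case: compatible.
Qed.

End Expansion.

Lemma sum_rc_weight a :
  \sum_(W : {set VV * VV} | W \subset eds) \sum_(U : {set VV} | U \subset thk)
     rc_weight beta W U a = 2 * spin_sum hpp a.
Proof.
have h_out x : x \notin thk -> hpp x = 0 by move=> xT; rewrite /h_pp ifN.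
have h_bc (S : {set VV}) x : x \in thk -> hpp x * spin R (x \notin S) = spin R (plus_bc S x).
  by move=> xT; rewrite /h_pp xT mul1r.
rewrite (spin_sum_expand h_out h_bc) mulr_sumr; apply: eq_bigr => W WE.
rewrite mulr_sumr; apply: eq_bigr => U UT.
by rewrite rc_weightE -natrX -(n_compatible_plus WE UT) natrM; ring.
Qed.

Lemma sum_rc_weight_disconnected a :
  \sum_(W : {set VV * VV} | W \subset eds)
    \sum_(U : {set VV} | (U \subset thk) && ghosts_disconnected R W U)
     rc_weight beta W U a = 2 * spin_sum hpm a.
Proof.
have h_out x : x \notin thk -> hpm x = 0.
  move=> xT; rewrite /h_pm (negbTE (contra (fintype.subsetP (thickP_sub_thick R d L M) x) xT)).
  by rewrite (negbTE (contra (fintype.subsetP (thickM_sub_thick R d L M) x) xT)) subr0.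
have h_bc (S : {set VV}) x :
    x \in thk -> hpm x * spin R (x \notin S) = spin R (plus_minus_bc R S x).
  move=> xT; rewrite /h_pm /plus_minus_bc (thickM_thickP xT).
  by case: (x \in thP); case: (x \in S); rewrite /spin /=; ring.
rewrite (spin_sum_expand h_out h_bc) mulr_sumr; apply: eq_bigr => W WE.
rewrite mulr_sumr big_mkcondr /=; apply: eq_bigr => U UT.
case: (boolP (ghosts_disconnected R W U)) => disc.
  rewrite n_compatible_plus_minus_disconnected //.
  by rewrite rc_weightE -natrX -(n_compatible_plus WE UT) natrM; ring.
by rewrite n_compatible_plus_minus_connected // mulr0 mulr0.
Qed.

End EdwardsSokal.

Section RealFacts.
Variable R : realType.

Lemma fine_mulr_pos (c : R) (x : \bar R) : 0 < c -> fine (c%:E * x)%E = c * fine x.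
Proof.
move=> c_gt0; case: x => [r| |]; first by rewrite -EFinM.
  by rewrite gt0_muley ?lte_fin //= mulr0.
by rewrite gt0_muleNy ?lte_fin //= mulr0.
Qed.

Lemma fine_div_le1 (x y : \bar R) : (0 <= x)%E -> (x <= y)%E -> fine x / fine y <= 1.
Proof.
case: x y => [r| |] [s| |] //=; rewrite ?lee_fin ?invr0 ?mulr0 // => r_ge0 r_le_s.
have [->|s_neq0] := eqVneq s 0; first by rewrite invr0 mulr0.
by rewrite ler_pdivrMr ?mul1r // lt_neqAle eq_sym s_neq0 (le_trans r_ge0 r_le_s).
Qed.

(* [x = 0] is allowed: [0^-1 = 0] and [ln 0 = 0]. *)
Lemma ln_inv_ge0 (x : R) : 0 <= x -> x <= 1 -> 0 <= ln x^-1.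
Proof.
move=> x_ge0 x_le1; have [->|x_neq0] := eqVneq x 0; first by rewrite invr0 ln0.
by apply: ln_ge0; rewrite invf_ge1 // lt_neqAle eq_sym x_neq0.
Qed.

Lemma limn_einf_ge0 (u : (\bar R)^nat) : (forall n, 0 <= u n)%E -> (0 <= limn_einf u)%E.
Proof.
move=> u_ge0; rewrite limn_einf_lim; apply: lime_ge; first exact: is_cvg_einfs.
by apply: nearW => n; apply/ereal_infP => _ [m _ <-].
Qed.

End RealFacts.

Section PartitionFunctions.
Variables (R : realType) (g a : R) (d L M : nat) (beta : R).
Local Notation VV := (V d L M).
Local Notation bx := (box d L M).
Local Notation hpp := (@h_pp R d L M).
Local Notation hpm := (@h_pm R d L M).

Lemma phi4_weight_local h (p1 p2 : VV -> R) :
  {in bx, p1 =1 p2} -> phi4_weight beta h p1 = phi4_weight beta h p2.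
Proof.
move=> p12; rewrite /phi4_weight (eq_bigr (fun e => p2 e.1 * p2 e.2)) => [|e].
  by rewrite (eq_bigr (fun x => h x * p2 x)) // => x xb; rewrite p12.
by move=> /edge_in_box /andP [e1b e2b]; rewrite !p12.
Qed.

(* Reindex by S |-> symdiff S [set x | psi x < 0]. *)
Lemma spin_sum_abs (h psi : VV -> R) :
  spin_sum beta h psi = spin_sum beta h (fun x => `|psi x|).
Proof.
pose N := [set v in bx | psi v < 0].
have Nbx : N \subset bx by apply/fintype.subsetP => x; rewrite inE => /andP [].
rewrite /spin_sum [RHS](reindex_inj (can_inj (symdiffK N))) /=.
apply: eq_big => S; first by rewrite symdiff_subset.
move=> _; apply: phi4_weight_local => x xb; rewrite /sign_flip in_symdiff inE xb /=.
case: (x \in S); case: (ltrP (psi x) 0) => psi_x /=.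
- by rewrite ltr0_norm.
- by rewrite ger0_norm.
- by rewrite ltr0_norm // opprK.
- by rewrite ger0_norm.
Qed.

Definition spin_integral (h : VV -> R) :=
  int_box g a (fun psi => (spin_sum beta h (fun x => `|psi x|))%:E).

Lemma measurable_obs_spin_sum (h : VV -> R) : measurable_obs (spin_sum beta h).
Proof.
apply: (measurable_obs_sum _ _ (f := fun S psi => phi4_weight beta h (sign_flip S psi))) => S.
exact/measurable_obs_sign_flip/measurable_obs_phi4_weight.
Qed.

Lemma spin_sum_ge0 (h psi : VV -> R) : 0 <= spin_sum beta h psi.
Proof. by apply: sumr_ge0 => S _; exact: expR_ge0. Qed.

(* Each sign flip preserves the product measure, so Z equals its average over
   all 2^|box| flips. *)
Lemma Zphi4_spin_integral (h : VV -> R) :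
  Zphi4 g a beta h = (#|powerset bx|%:R)^-1 * spin_integral h.
Proof.
have n_gt0 : (0 < #|powerset bx|)%N by rewrite card_powerset expn_gt0.
set n := #|powerset bx|.
set E := fun psi => (phi4_weight beta h psi)%:E.
have mE : emeasurable_obs E by exact/measurable_obs_EFin/measurable_obs_phi4_weight.
have E_ge0 psi : (0 <= E psi)%E by rewrite lee_fin expR_ge0.
pose zero := fun _ : VV => 0 : R.
have flip0 (S : {set VV}) : sign_flip S zero = zero.
  by apply/funext => v; rewrite /sign_flip /zero oppr0; case: (v \in S).
have avg : (iint g a E (enum bx) zero *+ n)%R =
            iint g a (fun psi => (spin_sum beta h psi)%:E) (enum bx) zero.
  rewrite /n -sumr_const (eq_bigl (fun S : {set VV} => S \subset bx)) => [|S]; last first.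
    by rewrite powersetE.
  rewrite (eq_bigr (fun S => iint g a (fun psi => E (sign_flip S psi)) (enum bx) zero)).
    rewrite -big_filter -iint_sum; last 2 first.
    - by move=> S; exact/measurable_obs_sign_flip/measurable_obs_phi4_weight.
    - by move=> S psi; exact: expR_ge0.
    by congr iint; apply/funext => psi; rewrite big_filter.
  by move=> S _; rewrite iint_sign_flip // flip0.
have -> : spin_integral h =
          fine (iint g a (fun psi => (spin_sum beta h psi)%:E) (enum bx) zero).
  by congr (fine (iint _ _ _ _ _)); apply/funext => psi; rewrite -spin_sum_abs.
have natmulE (x : \bar R) : (x *+ n)%R = (n%:R%:E * x)%E by rewrite mule_natl.
rewrite -avg natmulE fine_mulr_pos ?ltr0n //.
by rewrite mulrA mulVf ?mul1r // pnatr_eq0 -lt0n.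
Qed.

Lemma int_boxZl (f : (VV -> R) -> R) (c : R) :
  0 < c -> measurable_obs f -> (forall psi, 0 <= f psi) ->
  int_box g a (fun psi => (c * f psi)%:E) = c * int_box g a (fun psi => (f psi)%:E).
Proof.
move=> c_gt0 mf f_ge0; rewrite /int_box -fine_mulr_pos // -iintZl ?ltW //.
exact: measurable_obs_EFin.
Qed.

Lemma spin_integral_ge0 (h : VV -> R) : 0 <= spin_integral h.
Proof. by rewrite fine_ge0 // iint_ge0 // => psi; rewrite lee_fin spin_sum_ge0. Qed.

Lemma Psi0_disconnected_spin_integral :
  Psi0 g a beta (@ghosts_disconnected R d L M) = spin_integral hpm / spin_integral hpp.
Proof.
have m (h : VV -> R) :
    measurable_obs (fun psi : VV -> R => spin_sum beta h (fun x => `|psi x|)).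
  exact: (measurable_obs_abs (measurable_obs_spin_sum h)).
rewrite /Psi0; under eq_fun do rewrite sum_rc_weight_disconnected.
under [X in _ / int_box _ _ X]eq_fun do rewrite sum_rc_weight.
rewrite !int_boxZl ?ltr0n // => [|psi|psi]; try exact: spin_sum_ge0.
by rewrite -mulf_div divff ?mul1r.
Qed.

Lemma Zpm_div_Zpp :
  Zpm g a d L M beta / Zpp g a d L M beta = Psi0 g a beta (@ghosts_disconnected R d L M).
Proof.
rewrite Psi0_disconnected_spin_integral /Zpm /Zpp !Zphi4_spin_integral.
rewrite -mulf_div divff ?mul1r //.
by rewrite invr_eq0 pnatr_eq0 card_powerset expn_eq0.
Qed.

Lemma spin_sum_plus_minus_le (b : VV -> R) : 0 <= beta -> (forall x, 0 <= b x) ->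
  spin_sum beta hpm b <= spin_sum beta hpp b.
Proof.
move=> beta_ge0 b_ge0; rewrite -(ler_pM2l (ltr0n R 2)) -sum_rc_weight_disconnected.
rewrite -sum_rc_weight; apply: ler_sum => W _.
rewrite [X in _ <= X](bigID (fun U => ghosts_disconnected R W U)) /= lerDl.
by apply: sumr_ge0 => U _; exact: rc_weight_ge0.
Qed.

Lemma Psi0_disconnected_le1 : 0 <= beta -> Psi0 g a beta (@ghosts_disconnected R d L M) <= 1.
Proof.
move=> beta_ge0; rewrite Psi0_disconnected_spin_integral; apply: fine_div_le1.
  by apply: iint_ge0 => psi; rewrite lee_fin spin_sum_ge0.
apply: le_iint => [||psi|psi]; rewrite ?lee_fin ?spin_sum_ge0 //.
- exact: (measurable_obs_EFin (measurable_obs_abs (measurable_obs_spin_sum _))).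
- exact: (measurable_obs_EFin (measurable_obs_abs (measurable_obs_spin_sum _))).
- by apply: spin_sum_plus_minus_le => // x; exact: normr_ge0.
Qed.

End PartitionFunctions.

Unset Implicit Arguments.

Theorem lemma5p3 (R : realType) (g a : R) (d : nat) (hg : 0 < g) (hd : (2 <= d)%N) :
  (forall (beta : R) (L M : nat), 0 < beta -> (1 <= L)%N -> (1 <= M)%N ->
     Zpm g a d L M beta / Zpp g a d L M beta
     = Psi0 g a beta (@ghosts_disconnected R d L M)) /\
  (forall beta : R, 0 < beta -> (0 <= surface_tension g a d beta)%E).
Proof.
split=> [beta L M _ _ _ | beta beta_gt0]; first exact: Zpm_div_Zpp.
apply: limn_einf_ge0 => L; apply: limn_einf_ge0 => M.
rewrite lee_fin divr_ge0 ?exprn_ge0 ?ler0n // -invf_div Zpm_div_Zpp.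
apply: ln_inv_ge0; last exact/Psi0_disconnected_le1/ltW.
by rewrite Psi0_disconnected_spin_integral divr_ge0 ?spin_integral_ge0.
Qed.
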